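(* Let $\mathcal{M}=\langle\mathbf{U},\mathbf{V},\mathcal{F},P(\mathbf{U})\rangle$ and $\mathcal{M}'=\langle\mathbf{U}',\mathbf{V},\mathcal{F}',P(\mathbf{U}')\rangle$ be two SCMs over the same endogenous variables $\mathbf{V}$ and with the same functional counterfactual set $\mathbf{F}$. Then $P^{\mathcal{M}}(\mathbf{F}=\mathbf{f})=P^{\mathcal{M}'}(\mathbf{F}=\mathbf{f})$ for all $\mathbf{f}\in\mathcal{D}_{\mathbf{F}}$ if and only if $\mathcal{L}_3(\mathcal{M})=\mathcal{L}_3(\mathcal{M}')$.
   Context: An SCM $\mathcal{M}=\langle \mathbf{U},\mathbf{V},\mathcal{F},P(\mathbf{U})\rangle$ has exogenous variables $\mathbf{U}$, endogenous variables $\mathbf{V}$, functions $f_V$ mapping exogenous parents $\mathbf{U}_V$ and endogenous parents $\mathbf{Pa}_V\subseteq\mathbf{V}\setminus\{V\}$ to $V$, and a distribution $P(\mathbf{U})$; SCMs are recursive with finite discrete endogenous domains; $\mathcal{D}_{\mathbf{X}}$ is the domain of $\mathbf{X}$. $\mathbf{Y}_{\mathbf{x}}(\mathbf{u})$ is the value of $\mathbf{Y}$ under $\mathbf{u}$ in the submodel with the functions of $\mathbf{X}$ replaced by constants $\mathbf{x}$; $P^{\mathcal{M}}(\mathbf{y}_{1[\mathbf{x}_1]},\mathbf{y}_{2[\mathbf{x}_2]},\dots)=\int\mathbf{1}[\mathbf{Y}_{1[\mathbf{x}_1]}(\mathbf{u})=\mathbf{y}_1,\mathbf{Y}_{2[\mathbf{x}_2]}(\mathbf{u})=\mathbf{y}_2,\dots]dP(\mathbf{u})$,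 and $\mathcal{L}_3(\mathcal{M})$ is the set of all such counterfactual distributions. The functional counterfactual set of $\mathcal{M}$ is $\mathbf{F}=\{V_{i[\mathbf{pa}^{(j)}_{V_i}]}:V_i\in\mathbf{V},\ \mathbf{pa}^{(j)}_{V_i}\in\mathcal{D}_{\mathbf{Pa}_{V_i}}\}$ (each variable intervened on every instantiation of its parents; if $\mathbf{Pa}_{V_i}=\emptyset$, $V_i$ itself is in $\mathbf{F}$), with instantiations $\mathbf{f}\in\mathcal{D}_{\mathbf{F}}$; $P^{\mathcal{M}}(\mathbf{F}=\mathbf{f})$ is the corresponding joint counterfactual probability. *)

From HB Require Import structures.
From mathcomp Require Import all_boot all_algebra.
From mathcomp Require Import all_classical all_reals.
From mathcomp Require Import ereal measure probability.
Set Implicit Arguments. Unset Strict Implicit. Unset Printing Implicit Defensive.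
Local Open Scope classical_set_scope.

Section SCM.
Variables (V : finType) (D : V -> finType).

Definition assign := forall w : V, D w.

(* A partial assignment: [x w = Some a] means variable [w] is set to [a];
   [None] means [w] is not in the intervened/observed set. Used both for
   interventions [X = x] and for observed outcomes [Y = y]. *)
Definition pinst := forall w : V, option (D w).

(* Recursiveness: the parent relation is acyclic (a rank function exists).
   In particular no variable is its own parent. *)
Definition recursive_graph (pa : V -> {set V}) :=
  exists rk : V -> nat, forall v w, w \in pa v -> (rk w < rk v)%N.

Definition mechanism (U : Type) := forall v : V, U -> assign -> D v.

Definition local_mech (pa : V -> {set V}) U (f : mechanism U) :=
  forall v u (s t : assign), (forall w, w \in pa v -> s w = t w) ->
    f v u s = f v u t.

Definition measurable_mech d (U : measurableType d) (f : mechanism U) :=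
  forall v (s : assign) (a : D v), measurable [set u | f v u s = a].

(* [s] is the (unique, by recursiveness) solution of the submodel M_x
   under exogenous state [u]. *)
Definition is_solution U (f : mechanism U) (x : pinst) (u : U) (s : assign) :=
  forall w, s w = match x w with Some a => a | None => f w u s end.

(* The event Y_x(u) = y, where Y is the support of [y]. *)
Definition cf_event U (f : mechanism U) (x y : pinst) : set U :=
  [set u | exists s, is_solution f x u s /\
     forall w a, y w = Some a -> s w = a].

Definition L3_event U (f : mechanism U) (q : seq (pinst * pinst)) : set U :=
  [set u | forall i, (i < size q)%N ->
     cf_event f (nth (fun _ => None, fun _ => None) q i).1
                (nth (fun _ => None, fun _ => None) q i).2 u].

Definition parent_inst (pa : V -> {set V}) (v : V) (x : pinst) :=
  forall w, (w \in pa v) = isSome (x w).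

(* Event F = fF for the functional counterfactual set
   F = { V_v[pa] : v in V, pa in D_{Pa_v} }; an instantiation fF gives a
   value fF v x in D v to each V_v[x]. *)
Definition F_event (pa : V -> {set V}) U (f : mechanism U)
    (fF : forall v : V, pinst -> D v) : set U :=
  [set u | forall v x, parent_inst pa v x ->
     exists s, is_solution f x u s /\ s v = fF v x].

End SCM.

From HB Require Import structures.
From mathcomp Require Import all_boot all_algebra.
From mathcomp Require Import all_classical all_reals.
From mathcomp Require Import ereal measure probability.
Set Implicit Arguments. Unset Strict Implicit. Unset Printing Implicit Defensive.
Local Open Scope classical_set_scope.

(* An exogenous state u determines its response table (f_v(u, .))_v, an element
   of a finite type, and the solution of every submodel M_x under u depends on u
   only through this table.  Hence every counterfactual event is the preimage
   of a set of tables, and its probability is a finite sum of probabilities of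
   the fibres {table(u) = t}.  Since every f_v is local, a fibre is empty unless
   t is local too, and then it is exactly the functional counterfactual event
   F = f where f reads t off on the parent instantiations.  Conversely, F = f
   is the joint event of the finitely many counterfactuals V_v[pa] = f_v(pa). *)

Lemma finfun_funE (aT : finType) (rT : aT -> Type) (g : forall x, rT x) :
  fun_of_fin (finfun g) = g.
Proof. by apply: boolp.functional_extensionality_dep => x; rewrite ffunE. Qed.

Section FinitePreimage.
Local Open Scope ring_scope.
Local Open Scope ereal_scope.

Lemma measure_preimage_finType d (U : measurableType d) (R : realType)
    (mu : {measure set U -> \bar R}) (T : finType) (g : U -> T) (A : set T) :
  (forall t, measurable (g @^-1` [set t])) ->
  mu (g @^-1` A) = \sum_(t \in A) mu (g @^-1` [set t]).
Proof.
move=> mg; rewrite -measure_fin_bigcup //.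
- congr (mu _); apply/seteqP; split=> [u Au | u [t At /= ->]] //; by exists (g u).
- exact: finite_finset.
- by move=> s t _ _ [u [/= <- <-]].
Qed.

End FinitePreimage.

Section ResponseTable.
Variables (V : finType) (D : V -> finType).

Definition assignT := {dffun forall w : V, D w}.

Definition table := {dffun forall v : V, {ffun assignT -> D v}}.

Definition table_mech (t : table) : mechanism D unit := fun v _ s => t v (finfun s).

Definition response U (f : mechanism D U) (u : U) : table :=
  [ffun v => [ffun s : assignT => f v u s]].

Lemma L3_event_response U (f : mechanism D U) q :
  L3_event f q = response f @^-1` [set t | L3_event (table_mech t) q tt].
Proof.
have sol x u s : is_solution f x u s <-> is_solution (table_mech (response f u)) x tt s.
  by split=> sxu w; rewrite {1}sxu /table_mech !ffunE finfun_funE.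
by apply/seteqP; split=> u /= qu i /qu [s [/sol sxu ys]]; exists s.
Qed.

Lemma measurable_response_fiber d (U : measurableType d) (f : mechanism D U) t :
  measurable_mech f -> measurable (response f @^-1` [set t]).
Proof.
move=> mf.
have -> : response f @^-1` [set t] =
    \bigcap_(v in setT) \bigcap_(s in [set: assignT]) [set u | f v u s = t v s].
  apply/seteqP; split=> u /=; first by move=> <- v _ s _; rewrite !ffunE.
  by move=> ut; apply/ffunP=> v; apply/ffunP=> s; rewrite !ffunE; exact: ut.
apply: fin_bigcap_measurable => [|v _]; first exact: finite_finset.
by apply: fin_bigcap_measurable => [|s _]; [exact: finite_finset | exact: mf].
Qed.

Lemma local_response (pa : V -> {set V}) U (f : mechanism D U) u :
  local_mech pa f -> local_mech pa (table_mech (response f u)).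
Proof. by move=> lf v [] s s' ss'; rewrite /table_mech !ffunE !finfun_funE; exact: lf. Qed.

Local Open Scope ring_scope.
Local Open Scope ereal_scope.

Lemma measure_L3_event_response d (U : measurableType d) (R : realType)
    (mu : {measure set U -> \bar R}) (f : mechanism D U) q :
  measurable_mech f ->
  mu (L3_event f q) =
    \sum_(t \in [set t | L3_event (table_mech t) q tt]) mu (response f @^-1` [set t]).
Proof.
move=> mf; rewrite L3_event_response measure_preimage_finType // => t.
exact: measurable_response_fiber.
Qed.

End ResponseTable.

Section LocalMechanisms.
Variables (V : finType) (D : V -> finType) (pa : V -> {set V}).
Hypothesis pa_rec : recursive_graph pa.
Variable s0 : assign D.

Definition submodel_step U (f : mechanism D U) (x : pinst D) (u : U) (s : assign D) :
  assign D := fun w => if x w is Some a then a else f w u s.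

Lemma exists_solution U (f : mechanism D U) x u :
  local_mech pa f -> exists s, is_solution f x u s.
Proof.
move=> lf; have [rk rkP] := pa_rec.
pose it k := iter k (submodel_step f x u) s0.
have it_stable k w : (rk w < k)%N -> it k w = it k.+1 w.
  elim: k w => [//|k IH] w wk; rewrite /it !iterS /submodel_step.
  case: (x w) => //; apply: lf => w' /rkP w'w; apply: IH; exact: leq_trans w'w wk.
by exists (it (\max_w rk w).+1) => w; rewrite it_stable // ltnS leq_bigmax.
Qed.

Definition extend (x : pinst D) : assign D :=
  fun w => if x w is Some a then a else s0 w.

Lemma solution_parent_inst U (f : mechanism D U) v x u s :
  local_mech pa f -> parent_inst pa v x -> is_solution f x u s ->
  s v = f v u (extend x).
Proof.
move=> lf xv sol; have [rk rkP] := pa_rec.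
have vv : v \notin pa v by apply/negP => /rkP; rewrite ltnn.
have -> : s v = f v u s by rewrite sol; move: (xv v); rewrite (negbTE vv); case: (x v).
apply: lf => w wv; rewrite /extend sol; move: (xv w); rewrite wv.
by case: (x w).
Qed.

(* By locality of [t], the default [s0] used off the parents of [v] is irrelevant. *)
Definition table_F (t : table D) : forall v : V, pinst D -> D v :=
  fun v x => table_mech t v tt (extend x).

Lemma response_fiber_local U (f : mechanism D U) t :
  local_mech pa f -> local_mech pa (table_mech t) ->
  response f @^-1` [set t] = F_event pa f (table_F t).
Proof.
move=> lf lt; apply/seteqP; split=> u /=.
  move=> <- v x xv; have [s sol] := exists_solution x u lf.
  exists s; split=> //.
  by rewrite (solution_parent_inst lf xv sol) /table_F /table_mech !ffunE finfun_funE.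
move=> uF; apply/ffunP=> v; apply/ffunP=> s; rewrite !ffunE.
pose x : pinst D := fun w => if w \in pa v then Some (s w) else None.
have xv : parent_inst pa v x by move=> w; rewrite /x; case: (w \in pa v).
have sx w : w \in pa v -> s w = extend x w by move=> wv; rewrite /extend /x wv.
have [s' [sol s'v]] := uF v x xv.
rewrite (lf _ _ _ _ sx) -(solution_parent_inst lf xv sol) s'v.
by rewrite /table_F -(lt _ tt _ _ sx) /table_mech ffunK.
Qed.

Lemma response_fiber_nonlocal U (f : mechanism D U) t :
  local_mech pa f -> ~ local_mech pa (table_mech t) ->
  response f @^-1` [set t] = set0.
Proof.
move=> lf nlt; apply/seteqP; split=> u //= ut.
by apply: nlt; rewrite -ut; exact: local_response.
Qed.

End LocalMechanisms.

Section FunctionalCounterfactuals.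
Variables (V : finType) (D : V -> finType) (U : Type) (f : mechanism D U).

Lemma L3_event_nil : L3_event f [::] = setT.
Proof. by apply/seteqP; split. Qed.

Lemma L3_event_cons p q u :
  L3_event f (p :: q) u <-> cf_event f p.1 p.2 u /\ L3_event f q u.
Proof.
split=> [pqu | [pu qu] [|i] //= /qu //].
by split=> [|i]; [exact: (pqu 0%N) | exact: (pqu i.+1)].
Qed.

Lemma L3_event_uninhabited p q :
  ~ inhabited (assign D) -> L3_event f (p :: q) = set0.
Proof.
move=> noD; apply/seteqP; split=> u //= /L3_event_cons [[s _] _].
exact: noD (inhabits s).
Qed.

Lemma L3_event_map (A : eqType) (h : A -> pinst D * pinst D) r u :
  L3_event f (map h r) u <-> forall a, a \in r -> cf_event f (h a).1 (h a).2 u.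
Proof.
elim: r => [|b r IH] /=; first by split=> // _ [].
rewrite L3_event_cons IH; split=> [[bu ru] a | ru].
  by rewrite in_cons => /orP [/eqP -> // | /ru].
by split=> [|a ar]; apply: ru; rewrite ?mem_head // in_cons ar orbT.
Qed.

Definition pinst1 v (a : D v) : pinst D :=
  @dfwith _ (fun w => option (D w)) (fun _ => None) v (Some a).

Lemma pinst1P (s : assign D) v (a : D v) :
  (forall w b, pinst1 a w = Some b -> s w = b) <-> s v = a.
Proof.
split=> [sa | <- w b]; first by apply: sa; exact: dfwith_in.
by move: b; rewrite /pinst1; case: dfwithP => // b [<-].
Qed.

Variable pa : V -> {set V}.

Definition pinstT := {dffun forall w : V, option (D w)}.

Definition parent_instb (p : V * pinstT) : bool :=
  [forall w, (w \in pa p.1) == isSome (p.2 w)].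

Lemma parent_instbP v (x : pinstT) : reflect (parent_inst pa v x) (parent_instb (v, x)).
Proof. by apply: (iffP forallP) => xv w; apply/eqP. Qed.

Definition F_term (fF : forall v : V, pinst D -> D v) (p : V * pinstT) :
  pinst D * pinst D := (fun_of_fin p.2, pinst1 (fF p.1 p.2)).

Definition F_query fF : seq (pinst D * pinst D) := map (F_term fF) (enum parent_instb).

Lemma F_event_L3 fF : F_event pa f fF = L3_event f (F_query fF).
Proof.
apply/seteqP; split=> u; rewrite /F_query /=.
  move=> uF; apply/(L3_event_map (F_term fF)) => -[v x].
  rewrite mem_enum => /parent_instbP /uF [s [sol sv]].
  by exists s; split=> //; apply/pinst1P.
move=> /(L3_event_map (F_term fF)) uQ v x xv.
have vx : parent_instb (v, finfun x) by apply/parent_instbP; rewrite finfun_funE.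
have := uQ (v, finfun x); rewrite mem_enum /F_term /= finfun_funE.
by move=> /(_ vx) [s [sol /pinst1P]]; exists s.
Qed.

End FunctionalCounterfactuals.

Local Open Scope ereal_scope.

Theorem lemma2 (R : realType) (V : finType) (D : V -> finType)
  (pa : V -> {set V}) (Hrec : recursive_graph pa)
  (d1 : measure_display) (U1 : measurableType d1) (P1 : probability U1 R)
  (f1 : mechanism D U1)
  (Hloc1 : local_mech pa f1) (Hmeas1 : measurable_mech f1)
  (d2 : measure_display) (U2 : measurableType d2) (P2 : probability U2 R)
  (f2 : mechanism D U2)
  (Hloc2 : local_mech pa f2) (Hmeas2 : measurable_mech f2) :
  (forall fF : forall v : V, pinst D -> D v,
      P1 (F_event pa f1 fF) = P2 (F_event pa f2 fF)) <->
  (forall q : seq (pinst D * pinst D),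
      P1 (L3_event f1 q) = P2 (L3_event f2 q)).
Proof.
split=> [HF q | HL3 fF]; last by rewrite !F_event_L3 HL3.
have [[s0]|noD] := boolp.pselect (inhabited (assign D)); last first.
  case: q => [|p q]; first by rewrite !L3_event_nil !probability_setT.
  by rewrite !L3_event_uninhabited // !measure0.
rewrite (measure_L3_event_response _ _ Hmeas1) (measure_L3_event_response _ _ Hmeas2).
apply: eq_fsbigr => t _.
have [lt|nlt] := boolp.pselect (local_mech pa (table_mech t)).
  rewrite (response_fiber_local Hrec s0 Hloc1 lt) (response_fiber_local Hrec s0 Hloc2 lt).
  exact: HF.
by rewrite (response_fiber_nonlocal Hloc1 nlt) (response_fiber_nonlocal Hloc2 nlt) !measure0.
Qed.
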